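(* Let $X\in\mathscr{C}^-$, $B\in\mathcal{H}$ and $x\in\mathscr{C}(X,B)$, and suppose there is a distinguished triangle $X\overset{x}{\to}B\to U\to X[1]$ with $U\in\mathcal{U}$. Let $z_X\colon X\to Z_X$ be obtained as follows: choose a distinguished triangle $V\to U'\overset{a}{\to}X\to V[1]$ with $U'\in\mathcal{U},V\in\mathcal{V}$; choose a distinguished triangle $T[-1]\to S[-1]\overset{b}{\to}U'\to T$ with $S\in\mathcal{S},T\in\mathcal{T}$; and choose a distinguished triangle $S[-1]\overset{a\circ b}{\to}X\overset{z_X}{\to}Z_X\to S$ (then $Z_X\in\mathcal{H}$). Then the unique morphism $\zeta\in\underline{\mathcal{H}}(Z_X,B)$ satisfying $\zeta\circ\underline{z}_X=\underline{x}$ in $\underline{\mathscr{C}}$ is an epimorphism in $\underline{\mathcal{H}}$.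
   Context: $\mathscr{C}$ is a triangulated category with shift $[1]$; subcategories are full, additive, closed under isomorphisms and direct summands. $\mathrm{Ext}^1(X,Y)=\mathscr{C}(X,Y[1])$. $\mathcal{M}\ast\mathcal{N}$ is the full subcategory of objects $C$ admitting a distinguished triangle $M\to C\to N\to M[1]$ with $M\in\mathcal{M}$, $N\in\mathcal{N}$. A cotorsion pair $(\mathcal{U},\mathcal{V})$: $\mathrm{Ext}^1(\mathcal{U},\mathcal{V})=0$ and $\mathscr{C}=\mathcal{U}\ast\mathcal{V}[1]$. Fix a twin cotorsion pair, i.e. cotorsion pairs $(\mathcal{S},\mathcal{T}),(\mathcal{U},\mathcal{V})$ with $\mathrm{Ext}^1(\mathcal{S},\mathcal{V})=0$. Put $\mathcal{W}=\mathcal{T}\cap\mathcal{U}$, $\mathscr{C}^-=\mathcal{S}[-1]\ast\mathcal{W}$, $\mathscr{C}^+=\mathcal{W}\ast\mathcal{V}[1]$, $\mathcal{H}=\mathscr{C}^+\cap\mathscr{C}^-$. $\underline{\mathscr{C}}$, $\underline{\mathcal{H}}$ are the ideal quotients of $\mathscr{C}$, $\mathcal{H}$ by morphisms factoring through objects of $\mathcal{W}$, and $\underline{f}$ is the image of $f$. (Existence and uniqueness of $\zeta$ hold since $-\circ\underline{z}_X\colon\underline{\mathscr{C}}(Z_X,Y)\to\underline{\mathscr{C}}(X,Y)$ is bijective for all $Y\in\mathscr{C}^+$.) *)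

From HB Require Import structures.
From mathcomp Require Import all_boot all_algebra.
Set Implicit Arguments. Unset Strict Implicit. Unset Printing Implicit Defensive.
Import GRing.Theory.
Local Open Scope ring_scope.

Record PreTri := {
  Obj :> Type;
  Mor : Obj -> Obj -> zmodType;
  mcomp : forall X Y Z : Obj, Mor Y Z -> Mor X Y -> Mor X Z;
  idm : forall X : Obj, Mor X X;
  sh : Obj -> Obj;
  shH : forall X Y : Obj, Mor X Y -> Mor (sh X) (sh Y);
  dist : forall X Y Z : Obj, Mor X Y -> Mor Y Z -> Mor Z (sh X) -> Prop
}.
Arguments Mor {C} X Y : rename.
Arguments mcomp {C X Y Z} g f : rename.
Arguments idm {C} X : rename.
Arguments sh {C} X : rename.
Arguments shH {C X Y} f : rename.
Arguments dist {C X Y Z} f g h : rename.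

Section TriDefs.
Context (C : PreTri).

Definition is_iso (X Y : C) (f : Mor X Y) : Prop :=
  exists g : Mor Y X, mcomp g f = idm X /\ mcomp f g = idm Y.

Definition isoObj (X Y : C) : Prop := exists f : Mor X Y, is_iso f.

Definition is_zero (Z : C) : Prop :=
  forall Y : C, (forall f g : Mor Z Y, f = g) /\ (forall f g : Mor Y Z, f = g).

Definition biprod (X Y P : C) : Prop :=
  exists (i1 : Mor X P) (i2 : Mor Y P) (p1 : Mor P X) (p2 : Mor P Y),
    [/\ mcomp p1 i1 = idm X, mcomp p2 i2 = idm Y, mcomp p1 i2 = 0, mcomp p2 i1 = 0
      & mcomp i1 p1 + mcomp i2 p2 = idm P].

Definition additive_category : Prop :=
  [/\ (forall (X Y Z W : C) (h : Mor Z W) (g : Mor Y Z) (f : Mor X Y),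
          mcomp h (mcomp g f) = mcomp (mcomp h g) f),
      (forall (X Y : C) (f : Mor X Y), mcomp (idm Y) f = f /\ mcomp f (idm X) = f),
      (forall (X Y Z : C) (g g' : Mor Y Z) (f : Mor X Y),
          mcomp (g + g') f = mcomp g f + mcomp g' f)
    & (forall (X Y Z : C) (g : Mor Y Z) (f f' : Mor X Y),
          mcomp g (f + f') = mcomp g f + mcomp g f')]
  /\ (exists Z : C, is_zero Z)
  /\ (forall X Y : C, exists P : C, biprod X Y P).

Definition shift_autoequivalence : Prop :=
  [/\ (forall X : C, shH (idm X) = idm (sh X)),
      (forall (X Y Z : C) (g : Mor Y Z) (f : Mor X Y),
          shH (mcomp g f) = mcomp (shH g) (shH f)),
      (forall (X Y : C) (f f' : Mor X Y), shH (f + f') = shH f + shH f'),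
      (forall X Y : C, bijective (@shH C X Y))
    & (forall X : C, exists Y : C, isoObj (sh Y) X)].

Definition TR1 : Prop :=
  [/\
      (forall (X Y Z X' Y' Z' : C) (f : Mor X Y) (g : Mor Y Z) (h : Mor Z (sh X))
              (f' : Mor X' Y') (g' : Mor Y' Z') (h' : Mor Z' (sh X'))
              (u : Mor X X') (v : Mor Y Y') (w : Mor Z Z'),
          is_iso u -> is_iso v -> is_iso w ->
          mcomp v f = mcomp f' u -> mcomp w g = mcomp g' v ->
          mcomp (shH u) h = mcomp h' w ->
          dist f g h -> dist f' g' h'),
      (forall X Z : C, is_zero Z -> dist (idm X) (0 : Mor X Z) (0 : Mor Z (sh X)))
    &
      (forall (X Y : C) (f : Mor X Y),
          exists (Z : C) (g : Mor Y Z) (h : Mor Z (sh X)), dist f g h)].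

Definition TR2 : Prop :=
  forall (X Y Z : C) (f : Mor X Y) (g : Mor Y Z) (h : Mor Z (sh X)),
    dist f g h <-> dist g h (- shH f).

Definition TR3 : Prop :=
  forall (X Y Z X' Y' Z' : C) (f : Mor X Y) (g : Mor Y Z) (h : Mor Z (sh X))
         (f' : Mor X' Y') (g' : Mor Y' Z') (h' : Mor Z' (sh X'))
         (u : Mor X X') (v : Mor Y Y'),
    dist f g h -> dist f' g' h' -> mcomp v f = mcomp f' u ->
    exists w : Mor Z Z', mcomp w g = mcomp g' v /\ mcomp (shH u) h = mcomp h' w.

Definition TR4 : Prop :=
  forall (X Y Z Z' X' Y' : C) (f : Mor X Y) (g : Mor Y Z)
         (f1 : Mor Y Z') (f2 : Mor Z' (sh X))
         (g1 : Mor Z X') (g2 : Mor X' (sh Y))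
         (h1 : Mor Z Y') (h2 : Mor Y' (sh X)),
    dist f f1 f2 -> dist g g1 g2 -> dist (mcomp g f) h1 h2 ->
    exists (u : Mor Z' Y') (v : Mor Y' X'),
      [/\ dist u v (mcomp (shH f1) g2),
          mcomp u f1 = mcomp h1 g, mcomp h2 u = f2,
          mcomp v h1 = g1 & mcomp g2 v = mcomp (shH f) h2].

Definition triangulated : Prop :=
  additive_category /\ shift_autoequivalence /\ TR1 /\ TR2 /\ TR3 /\ TR4.

Definition subcat (P : C -> Prop) : Prop :=
  [/\ (forall X Y : C, isoObj X Y -> P X -> P Y),
      (exists Z : C, is_zero Z /\ P Z),
      (forall X Y Q : C, biprod X Y Q -> P X -> P Y -> P Q)
    & (forall X Y Q : C, biprod X Y Q -> P Q -> P X)].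

Definition shift1 (P : C -> Prop) (X : C) : Prop :=
  exists Y : C, P Y /\ isoObj (sh Y) X.
Definition shiftm1 (P : C -> Prop) (X : C) : Prop :=
  exists Y : C, P Y /\ isoObj (sh X) Y.

Definition star (M N : C -> Prop) (X : C) : Prop :=
  exists (A B : C) (f : Mor A X) (g : Mor X B) (h : Mor B (sh A)),
    [/\ M A, N B & dist f g h].

Definition Ext1_vanish (P Q : C -> Prop) : Prop :=
  forall (X Y : C) (f : Mor X (sh Y)), P X -> Q Y -> f = 0.

Definition cotorsion_pair (P Q : C -> Prop) : Prop :=
  Ext1_vanish P Q /\ (forall X : C, star P (shift1 Q) X).

Definition twin_cotorsion_pair (S T U V : C -> Prop) : Prop :=
  [/\ cotorsion_pair S T, cotorsion_pair U V & Ext1_vanish S V].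

Definition Wc (T U : C -> Prop) (X : C) : Prop := T X /\ U X.
Definition Cminus (S T U : C -> Prop) : C -> Prop := star (shiftm1 S) (Wc T U).
Definition Cplus (T U V : C -> Prop) : C -> Prop := star (Wc T U) (shift1 V).
Definition Hc (S T U V : C -> Prop) (X : C) : Prop := Cplus T U V X /\ Cminus S T U X.

Definition factors_through (W : C -> Prop) (X Y : C) (f : Mor X Y) : Prop :=
  exists (Z : C) (g : Mor Z Y) (h : Mor X Z), W Z /\ f = mcomp g h.

Definition quot_eq (W : C -> Prop) (X Y : C) (f g : Mor X Y) : Prop :=
  factors_through W (f - g).

Definition quot_epi (W H : C -> Prop) (Z B : C) (zeta : Mor Z B) : Prop :=
  forall (D : C) (g h : Mor B D), H D ->
    quot_eq W (mcomp g zeta) (mcomp h zeta) -> quot_eq W g h.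

End TriDefs.

(** Write [f := g - h] for two maps [g h : B -> D] with [D] in [H] that agree
    on [zeta] modulo [W]. Choose a triangle [A -i-> D -j-> B' -> A[1]] with
    [A] in [W] and [B'] in [V[1]]. Every map from [W] into [B'] vanishes, as
    [W] lies in [U]; since [zeta o z_X] and [x] agree modulo [W], this gives
    [j o f o x = 0]. Hence [j o f] factors through the cone [U0] of [x], and
    so [j o f = 0] because [Ext^1(U, V) = 0]. Therefore [f] factors through
    [i], i.e. through [A] in [W]. *)
From HB Require Import structures.
From mathcomp Require Import all_boot all_algebra.
Set Implicit Arguments. Unset Strict Implicit. Unset Printing Implicit Defensive.
Import GRing.Theory.
Local Open Scope ring_scope.

Section AdditiveMaps.
Variables (M N : zmodType) (phi : M -> N).
Hypothesis phiD : {morph phi : a b / a + b}.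

Lemma additive_map0 : phi 0 = 0.
Proof. by apply: (@addrI _ (phi 0)); rewrite -phiD !addr0. Qed.

Lemma additive_mapN a : phi (- a) = - phi a.
Proof. by apply/eqP; rewrite -addr_eq0 -phiD addNr additive_map0. Qed.

Lemma additive_mapB a b : phi (a - b) = phi a - phi b.
Proof. by rewrite phiD additive_mapN. Qed.

End AdditiveMaps.

Section AdditiveCategory.
Variable C : PreTri.
Hypothesis HA : additive_category C.

Lemma mcompA (X Y Z W : C) (h : Mor Z W) (g : Mor Y Z) (f : Mor X Y) :
  mcomp h (mcomp g f) = mcomp (mcomp h g) f.
Proof. by case: HA => [[compA _ _ _] _]; apply: compA. Qed.

Lemma mcomp1l (X Y : C) (f : Mor X Y) : mcomp (idm Y) f = f.
Proof. by case: HA => [[_ comp1 _ _] _]; case: (comp1 _ _ f). Qed.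

Lemma mcomp1r (X Y : C) (f : Mor X Y) : mcomp f (idm X) = f.
Proof. by case: HA => [[_ comp1 _ _] _]; case: (comp1 _ _ f). Qed.

Lemma mcompDl (X Y Z : C) (f : Mor X Y) :
  {morph (fun g : Mor Y Z => mcomp g f) : g g' / g + g'}.
Proof. by case: HA => [[_ _ compDl _] _] g g'; apply: compDl. Qed.

Lemma mcompDr (X Y Z : C) (g : Mor Y Z) :
  {morph (fun f : Mor X Y => mcomp g f) : f f' / f + f'}.
Proof. by case: HA => [[_ _ _ compDr] _] f f'; apply: compDr. Qed.

Lemma mcomp0l (X Y Z : C) (f : Mor X Y) : mcomp (0 : Mor Y Z) f = 0.
Proof. exact: additive_map0 (mcompDl f). Qed.

Lemma mcomp0r (X Y Z : C) (g : Mor Y Z) : mcomp g (0 : Mor X Y) = 0.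
Proof. exact: additive_map0 (mcompDr g). Qed.

Lemma mcompNl (X Y Z : C) (g : Mor Y Z) (f : Mor X Y) :
  mcomp (- g) f = - mcomp g f.
Proof. exact: additive_mapN (mcompDl f) g. Qed.

Lemma mcompNr (X Y Z : C) (g : Mor Y Z) (f : Mor X Y) :
  mcomp g (- f) = - mcomp g f.
Proof. exact: additive_mapN (mcompDr g) f. Qed.

Lemma mcompBl (X Y Z : C) (g g' : Mor Y Z) (f : Mor X Y) :
  mcomp (g - g') f = mcomp g f - mcomp g' f.
Proof. exact: additive_mapB (mcompDl f) g g'. Qed.

Lemma mcompBr (X Y Z : C) (g : Mor Y Z) (f f' : Mor X Y) :
  mcomp g (f - f') = mcomp g f - mcomp g f'.
Proof. exact: additive_mapB (mcompDr g) f f'. Qed.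

Lemma factors_through_compl (W : C -> Prop) (X Y Z : C) (g : Mor Y Z) (f : Mor X Y) :
  factors_through W f -> factors_through W (mcomp g f).
Proof.
by case=> [P [p [q [WP ->]]]]; exists P, (mcomp g p), q; rewrite mcompA.
Qed.

Lemma factors_through_compr (W : C -> Prop) (X Y Z : C) (g : Mor Y Z) (f : Mor X Y) :
  factors_through W g -> factors_through W (mcomp g f).
Proof.
by case=> [P [p [q [WP ->]]]]; exists P, p, (mcomp q f); rewrite mcompA.
Qed.

Lemma Ext1_vanish_shift1 (U V : C -> Prop) (Z Y : C) (m : Mor Z Y) :
  Ext1_vanish U V -> U Z -> shift1 V Y -> m = 0.
Proof.
move=> UV UZ [Y' [VY' [s [s' [_ ss']]]]].
have -> : m = mcomp s (mcomp s' m) by rewrite mcompA ss' mcomp1l.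
by rewrite (UV _ _ (mcomp s' m) UZ VY') mcomp0r.
Qed.

Lemma Ext1_vanish_factors (W U V : C -> Prop) (Y D B' : C)
    (j : Mor D B') (m : Mor Y D) :
  (forall Z, W Z -> U Z) -> Ext1_vanish U V -> shift1 V B' ->
  factors_through W m -> mcomp j m = 0.
Proof.
move=> WU UV VB' [P [p [q [WP ->]]]].
by rewrite mcompA (Ext1_vanish_shift1 (mcomp j p) UV (WU _ WP) VB') mcomp0l.
Qed.

End AdditiveCategory.

Section Triangulated.
Variable C : PreTri.
Hypothesis HC : triangulated C.

Let HA : additive_category C := proj1 HC.

Lemma is_zero_sh (Z : C) : is_zero Z -> is_zero (sh Z).
Proof.
move=> Z0; case: HC => _ [[sh1 _ shD _ _] _].
have id0 : idm (sh Z) = 0.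
  by rewrite -sh1 ((Z0 Z).1 (idm Z) 0); apply: additive_map0 => f f'; apply: shD.
move=> Y; split=> f g.
- by rewrite -(mcomp1r HA f) -(mcomp1r HA g) id0 !mcomp0r.
- by rewrite -(mcomp1l HA f) -(mcomp1l HA g) id0 !mcomp0l.
Qed.

Lemma dist_coker_factor (X Y Z W : C) (f : Mor X Y) (g : Mor Y Z) (h : Mor Z (sh X))
    (k : Mor Y W) :
  dist f g h -> mcomp k f = 0 -> exists r : Mor Z W, mcomp r g = k.
Proof.
case: HC => _ [_ [[_ dist_id _] [rot [morph _]]]] fgh kf0.
case: HA => _ [[Z0 Z0_0] _].
have shZ0_0 := is_zero_sh Z0_0.
have dist0 : dist (0 : Mor Z0 W) (idm W) (0 : Mor W (sh Z0)).
  by apply/rot; rewrite ((shZ0_0 (sh W)).1 (- shH 0) 0); apply: dist_id.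
have [r [rg _]] := morph _ _ _ _ _ _ f g h _ _ _ (0 : Mor X Z0) k fgh dist0
  (etrans kf0 (esym (mcomp0l HA _ _))).
by exists r; rewrite rg mcomp1l.
Qed.

Lemma dist_ker_factor (X Y Z W : C) (f : Mor X Y) (g : Mor Y Z) (h : Mor Z (sh X))
    (k : Mor W Y) :
  dist f g h -> mcomp g k = 0 -> exists u : Mor W X, mcomp f u = k.
Proof.
case: HC => _ [[sh1 shM _ shB _] [[_ dist_id _] [rot [morph _]]]] fgh gk0.
case: HA => _ [[Z0 Z0_0] _].
have dist0 := proj1 (rot _ _ _ _ _ _) (dist_id W Z0 Z0_0).
have [w [_ hw]] := morph _ _ _ _ _ _ _ _ _ _ _ _ k (0 : Mor Z0 Z) dist0
  (proj1 (rot _ _ _ _ _ _) fgh) (etrans (mcomp0l HA _ _) (esym gk0)).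
have [unsh _ unshK] := shB W X.
exists (unsh w); apply: (bij_inj (shB W Y)).
move: hw; rewrite (mcompNr HA) (mcompNl HA) sh1 (mcomp1r HA) => /oppr_inj ->.
by rewrite shM unshK.
Qed.

Lemma dist_lift_orth_cone (X B U0 A D B' : C)
    (x : Mor X B) (x1 : Mor B U0) (x2 : Mor U0 (sh X))
    (i : Mor A D) (j : Mor D B') (k : Mor B' (sh A)) (f : Mor B D) :
  dist x x1 x2 -> dist i j k -> (forall r : Mor U0 B', r = 0) ->
  mcomp j (mcomp f x) = 0 -> exists u : Mor B A, mcomp i u = f.
Proof.
move=> dx di orth jfx0.
have [r rx1] := dist_coker_factor dx (etrans (esym (mcompA HA j f x)) jfx0).
have jf0 : mcomp j f = 0 by rewrite -rx1 (orth r) mcomp0l.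
exact: dist_ker_factor di jf0.
Qed.

End Triangulated.

Theorem lemma5p2 (C : PreTri) (HC : triangulated C)
  (S T U V : C -> Prop)
  (HSs : subcat S) (HTs : subcat T) (HUs : subcat U) (HVs : subcat V)
  (Htw : twin_cotorsion_pair S T U V)
  (X B U0 : C) (HX : Cminus S T U X) (HB : Hc S T U V B)
  (x : Mor X B) (x1 : Mor B U0) (x2 : Mor U0 (sh X))
  (HU0 : U U0) (Hdx : dist x x1 x2)
  (V0 U' : C) (v : Mor V0 U') (a : Mor U' X) (w : Mor X (sh V0))
  (HV0 : V V0) (HU' : U U') (Hda : dist v a w)
  (T1 S1 : C) (t : Mor T1 S1) (b : Mor S1 U') (c : Mor U' (sh T1))
  (HT1 : T (sh T1)) (HS1 : S (sh S1)) (Hdb : dist t b c)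
  (ZX : C) (zX : Mor X ZX) (e : Mor ZX (sh S1)) (Hdz : dist (mcomp a b) zX e)
  (zeta : Mor ZX B) (Hzeta : quot_eq (Wc T U) (mcomp zeta zX) x) :
  quot_epi (Wc T U) (Hc S T U V) zeta.
Proof.
have HA : additive_category C by case: HC.
have [_ [UV _] _] := Htw.
have WU : forall Z, Wc T U Z -> U Z by move=> Z [].
move=> D g h [[A [B' [i [j [k [WA VB' di]]]]]] _] gh_zeta.
have kills := Ext1_vanish_factors HA j WU UV VB'.
have jfx0 : mcomp j (mcomp (g - h) x) = 0.
  have -> : x = mcomp zeta zX - (mcomp zeta zX - x) by rewrite opprB addrC subrK.
  rewrite (mcompBr HA) (mcompA HA _ zeta) (mcompBl HA g h zeta) (mcompBr HA).
  rewrite !kills ?subrr //; first exact: factors_through_compl.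
  exact: factors_through_compr.
have [u iu] := dist_lift_orth_cone HC Hdx di
  (fun r => Ext1_vanish_shift1 HA r UV HU0 VB') jfx0.
by exists A, i, u.
Qed.
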